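(* Let $H:\mathbb{R}^n\to\mathbb{R}$ be $\mu_H$-strongly convex with $\mu_H>0$, let $f^i_{j_i}:\mathbb{R}^n\to\mathbb{R}$ ($i\in[S]$, $j_i\in[I_i]$) be convex, and let $X\subset\mathbb{R}^n$ be nonempty, compact and convex. Let $m:=\sum_{i=1}^S I_i$, $F:=\sum_{i=1}^S\sum_{j_i=1}^{I_i} f^i_{j_i}$, and let $\{x_k\}_{k=1}^\infty$ be a sequence generated by FISM (described in the context) with positive stepsizes $\{\gamma_k\}_{k=1}^\infty$, $\{\lambda_k\}_{k=1}^\infty$. Suppose that $0<\gamma_k\lambda_k\mu_H\le 2m$ for all $k\ge 1$ and that $\{\lambda_k\}_{k=1}^\infty$ is nonincreasing. For each $k\ge1$ let $x^*_{\lambda_k}$ be the unique minimizer of $F+\lambda_k H$ over $X$. Then for all $k\ge 2$, $$\|x_{k+1}-x^*_{\lambda_k}\|^2\le\Big(1-\frac{\gamma_k\lambda_k\mu_H}{2m}\Big)\|x_k-x^*_{\lambda_{k-1}}\|^2+\frac{4mC_H^2}{\gamma_k\lambda_k\mu_H^3}\Big(1-\frac{\lambda_{k-1}}{\lambda_k}\Big)^2+\gamma_k^2 C,$$ where $C:=4m^3\Big(C_f^2+\frac{2\lambda_1^2C_H^2}{m^2}\Big)+2C_fm^2\Big(C_f+\frac{\lambda_1C_H}{m}\Big)$.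
   Context: Notation: $[s]:=\{1,\dots,s\}$; $P_X$ is the Euclidean metric projection onto $X$; $\partial$ denotes the convex subdifferential. Constants: $C_f>0$ is a constant such that for all $i\in[S]$, $j_i\in[I_i]$ and all $x,y\in X$, every $g\in\partial f^i_{j_i}(x)$ satisfies $\|g\|\le C_f$ and $|f^i_{j_i}(x)-f^i_{j_i}(y)|\le C_f\|x-y\|$; $C_H>0$ is a constant such that for all $x,y\in X$, every $g\in\partial H(x)$ satisfies $\|g\|\le C_H$, $|H(x)-H(y)|\le C_H\|x-y\|$ and $|H(x)|\le C_H$ (such constants exist by compactness of $X$). FISM (Federated Incremental Subgradient Method): given a starting point $x_1\in\mathbb{R}^n$ and positive stepsizes $\{\gamma_k\},\{\lambda_k\}$, for $k=1,2,\dots$: pick $\mathcal{H}_k\in\partial H(x_k)$; for every client $i\in[S]$ set $x^i_{k,1}=x_k$ and for $j_i=1,\dots,I_i$ pick $g^i_{k,j_i}\in\partial f^i_{j_i}(x^i_{k,j_i})$ and set $x^i_{k,j_i+1}=P_X\big[x^i_{k,j_i}-\gamma_k g^i_{k,j_i}-\frac{\gamma_k\lambda_k}{m}\mathcal{H}_k\big]$; then set $x^i_k=x^i_{k,I_i+1}$ and $x_{k+1}=\frac1S\sum_{i=1}^S x^i_k$. *)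

(* R^n is represented as 'rV[R]_n. *)
From HB Require Import structures.
From mathcomp Require Import all_boot all_order all_algebra.
From mathcomp Require Import all_classical all_reals all_analysis.
Set Implicit Arguments. Unset Strict Implicit. Unset Printing Implicit Defensive.
Import Order.TTheory GRing.Theory Num.Theory.
Import numFieldTopology.Exports numFieldNormedType.Exports.
Local Open Scope ring_scope.
Local Open Scope classical_set_scope.

Section Defs.
Variables (R : realType) (n : nat).
Local Notation vec := 'rV[R]_n.

Definition dotv (u v : vec) : R := \sum_(i < n) u ord0 i * v ord0 i.
Definition enorm (u : vec) : R := Num.sqrt (dotv u u).

Definition cvx_set (X : set vec) : Prop :=
  forall x y t, X x -> X y -> 0 <= t -> t <= 1 -> X (t *: x + (1 - t) *: y).

Definition convex_fun (f : vec -> R) : Prop :=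
  forall x y t, 0 <= t -> t <= 1 ->
    f (t *: x + (1 - t) *: y) <= t * f x + (1 - t) * f y.

Definition strongly_convex (mu : R) (f : vec -> R) : Prop :=
  forall x y t, 0 <= t -> t <= 1 ->
    f (t *: x + (1 - t) *: y) <=
      t * f x + (1 - t) * f y - mu / 2 * t * (1 - t) * enorm (x - y) ^+ 2.

Definition subgrad (f : vec -> R) (x g : vec) : Prop :=
  forall y, f x + dotv g (y - x) <= f y.

Definition is_proj (X : set vec) (y p : vec) : Prop :=
  X p /\ forall z, X z -> enorm (y - p) <= enorm (y - z).

Definition is_argmin (X : set vec) (phi : vec -> R) (x : vec) : Prop :=
  X x /\ forall z, X z -> phi x <= phi z.

End Defs.

From HB Require Import structures.
From mathcomp Require Import all_boot all_order all_algebra.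
From mathcomp Require Import all_classical all_reals all_analysis.
From mathcomp Require Import ring lra.
Import Order.TTheory GRing.Theory Num.Theory.
Import numFieldTopology.Exports numFieldNormedType.Exports.
Local Open Scope ring_scope.
Local Open Scope classical_set_scope.

(* On each client, the projection onto X is closer to every point of X than the
   unprojected point, so one incremental step decreases the squared distance to
   x*_{λ_k} by the linearisation of f^i_j + (λ_k/m) H at x_k, up to an error that
   is quadratic in γ_k because the inner iterates stay within γ_k (C_f + λ_k C_H/m)
   per step of x_k.  Averaging the clients (Jensen) and summing, optimality of
   x*_{λ_k} for F + λ_k H absorbs the linear terms and the strong convexity of H
   leaves the factor 1 - γ_k λ_k μ_H / m.  Adding the quadratic growth inequalities
   of the two regularised objectives shows that the minimisers drift by at most
   (C_H/μ_H)(λ_{k-1}/λ_k - 1), and Young's inequality trades half of the contraction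
   for replacing x*_{λ_k} by x*_{λ_{k-1}} on the right-hand side. *)

Section Euclidean.
Context {R : realType} {n : nat}.
Local Notation vec := 'rV[R]_n.
Implicit Types (u v w : vec) (c : R).

Lemma dotvC u v : dotv u v = dotv v u.
Proof. by apply: eq_bigr => i _; rewrite mulrC. Qed.

Lemma dotvDl u v w : dotv (u + v) w = dotv u w + dotv v w.
Proof. by rewrite /dotv -big_split; apply: eq_bigr => i _; rewrite mxE mulrDl. Qed.

Lemma dotvDr u v w : dotv w (u + v) = dotv w u + dotv w v.
Proof. by rewrite dotvC dotvDl !(dotvC w). Qed.

Lemma dotvZl c u v : dotv (c *: u) v = c * dotv u v.
Proof. by rewrite /dotv mulr_sumr; apply: eq_bigr => i _; rewrite mxE mulrA. Qed.

Lemma dotvZr c u v : dotv u (c *: v) = c * dotv u v.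
Proof. by rewrite dotvC dotvZl dotvC. Qed.

Lemma dotvNl u v : dotv (- u) v = - dotv u v.
Proof. by rewrite -scaleN1r dotvZl mulN1r. Qed.

Lemma dotvNr u v : dotv u (- v) = - dotv u v.
Proof. by rewrite dotvC dotvNl dotvC. Qed.

Lemma dotvBl u v w : dotv (u - v) w = dotv u w - dotv v w.
Proof. by rewrite dotvDl dotvNl. Qed.

Lemma dotvBr u v w : dotv w (u - v) = dotv w u - dotv w v.
Proof. by rewrite dotvDr dotvNr. Qed.

Lemma dotvv_ge0 u : 0 <= dotv u u.
Proof. by apply: sumr_ge0 => i _; rewrite -expr2 sqr_ge0. Qed.

Lemma dotvv_eq0 u : dotv u u = 0 -> forall v, dotv u v = 0.
Proof.
move=> uu0 v; rewrite /dotv big1 // => i _.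
have /(_ i isT)/eqP : forall i, true -> u ord0 i * u ord0 i = 0.
  by apply: psumr_eq0P uu0 => j _; rewrite -expr2 sqr_ge0.
by rewrite mulf_eq0 orbb => /eqP ->; rewrite mul0r.
Qed.

Lemma enorm_ge0 u : 0 <= enorm u.
Proof. exact: sqrtr_ge0. Qed.

Lemma enorm_sqr u : enorm u ^+ 2 = dotv u u.
Proof. by rewrite sqr_sqrtr // dotvv_ge0. Qed.

Lemma enormN u : enorm (- u) = enorm u.
Proof. by rewrite /enorm dotvNl dotvNr opprK. Qed.

Lemma enormBC u v : enorm (u - v) = enorm (v - u).
Proof. by rewrite -enormN opprB. Qed.

Lemma enormZ c u : enorm (c *: u) = `|c| * enorm u.
Proof. by rewrite /enorm dotvZl dotvZr mulrA -expr2 sqrtrM ?sqr_ge0 // sqrtr_sqr. Qed.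

Lemma enorm0 : enorm (0 : vec) = 0.
Proof. by have := enormZ 0 0; rewrite scale0r normr0 mul0r. Qed.

Lemma enormD_sqr u v :
  enorm (u + v) ^+ 2 = enorm u ^+ 2 + 2 * dotv u v + enorm v ^+ 2.
Proof. by rewrite !enorm_sqr dotvDl !dotvDr (dotvC v u); ring. Qed.

Lemma enormB_sqr u v :
  enorm (u - v) ^+ 2 = enorm u ^+ 2 - 2 * dotv u v + enorm v ^+ 2.
Proof. by rewrite !enorm_sqr dotvBl !dotvBr (dotvC v u); ring. Qed.

Lemma dotv_le_enorm u v : dotv u v <= enorm u * enorm v.
Proof.
have [u0|u_neq0] := eqVneq (enorm u) 0.
  by rewrite dotvv_eq0 -?enorm_sqr ?u0 ?expr0n ?mul0r.
have [v0|v_neq0] := eqVneq (enorm v) 0.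
  by rewrite dotvC dotvv_eq0 -?enorm_sqr ?v0 ?expr0n ?mulr0.
set a := enorm u; set b := enorm v.
have ab_gt0 : 0 < a * b by rewrite mulr_gt0 // lt0r ?u_neq0 ?v_neq0 enorm_ge0.
have := sqr_ge0 (enorm (b *: u - a *: v)).
rewrite enormB_sqr !enormZ dotvZl dotvZr !ger0_norm ?enorm_ge0 // -/a -/b => h.
rewrite -subr_ge0 -(pmulr_rge0 _ ab_gt0); nra.
Qed.

Lemma dotv_ge_enorm u v : - (enorm u * enorm v) <= dotv u v.
Proof. by rewrite lerNl -dotvNl -(enormN u) dotv_le_enorm. Qed.

Lemma enormD u v : enorm (u + v) <= enorm u + enorm v.
Proof.
rewrite -ler_sqr ?nnegrE ?addr_ge0 ?enorm_ge0 // enormD_sqr sqrrD.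
by have := dotv_le_enorm u v; lra.
Qed.

Lemma sqr_sumr_le S (a : 'I_S -> R) : (\sum_i a i) ^+ 2 <= S%:R * \sum_i a i ^+ 2.
Proof.
have : 0 <= \sum_i \sum_j (a i - a j) ^+ 2.
  by apply: sumr_ge0 => i _; apply: sumr_ge0 => j _; exact: sqr_ge0.
suff -> : \sum_i \sum_j (a i - a j) ^+ 2
        = 2 * (S%:R * \sum_i a i ^+ 2) - 2 * (\sum_i a i) ^+ 2 by lra.
transitivity (\sum_i (S%:R * a i ^+ 2 + \sum_j a j ^+ 2 - 2 * (a i * \sum_j a j))).
  apply: eq_bigr => i _.
  have -> : S%:R * a i ^+ 2 = \sum_(j < S) a i ^+ 2.
    by rewrite sumr_const card_ord mulr_natl.
  rewrite !mulr_sumr -big_split.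
  by rewrite -sumrN -big_split /=; apply: eq_bigr => j _; rewrite sqrrB; ring.
rewrite !big_split /= sumrN sumr_const card_ord -!mulr_sumr -mulr_suml.
by rewrite -mulr_natl expr2; ring.
Qed.

Lemma enorm_sum_sqr_le S (v : 'I_S -> vec) :
  enorm (\sum_i v i) ^+ 2 <= S%:R * \sum_i enorm (v i) ^+ 2.
Proof.
rewrite enorm_sqr /dotv; under eq_bigr do rewrite summxE -expr2.
under [X in _ <= _ * X]eq_bigr do rewrite enorm_sqr /dotv.
rewrite exchange_big mulr_sumr; apply: ler_sum => c _.
under [X in _ <= _ * X]eq_bigr do rewrite -expr2.
exact: sqr_sumr_le.
Qed.

Lemma enorm_avg_subr_sqr_le S (v : 'I_S -> vec) y : (0 < S)%N ->
  S%:R * enorm (S%:R^-1 *: \sum_i v i - y) ^+ 2 <= \sum_i enorm (v i - y) ^+ 2.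
Proof.
move=> S_gt0; have S_gt0r : 0 < S%:R :> R by rewrite ltr0n.
have -> : S%:R^-1 *: \sum_i v i - y = S%:R^-1 *: \sum_i (v i - y).
  rewrite sumrB sumr_const card_ord scalerBr -[y *+ S]scaler_nat scalerA.
  by rewrite mulVf ?scale1r ?gt_eqF.
rewrite enormZ exprMn ger0_norm ?invr_ge0 ?ler0n //.
have := enorm_sum_sqr_le _ (fun i => v i - y); set Z := enorm _ ^+ 2 => Z_le.
have -> : S%:R * (S%:R^-1 ^+ 2 * Z) = Z / S%:R by field; rewrite gt_eqF.
by rewrite ler_pdivrMr // mulrC.
Qed.

Lemma sumr_sqr_le_sqr_sumr S (a : 'I_S -> R) : (forall i, 0 <= a i) ->
  \sum_i a i ^+ 2 <= (\sum_i a i) ^+ 2.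
Proof.
move=> a_ge0; rewrite [X in _ <= X]expr2 mulr_suml; apply: ler_sum => i _.
by rewrite expr2 ler_wpM2l // (bigD1 i) //= lerDl sumr_ge0.
Qed.

End Euclidean.

Section Convexity.
Context {R : realType} {n : nat}.
Local Notation vec := 'rV[R]_n.
Implicit Types (u v w y z p : vec) (X : set vec).

Lemma le0_of_le_mul_small (a b : R) :
  0 <= b -> (forall t, 0 < t -> t < 1 -> a <= t * b) -> a <= 0.
Proof.
move=> b_ge0 small; rewrite leNgt; apply/negP => a_gt0.
have ab_gt0 : 0 < a + b by lra.
have t_gt0 : 0 < a / (2 * (a + b)) by rewrite divr_gt0 // mulr_gt0.
have t_lt1 : a / (2 * (a + b)) < 1 by rewrite ltr_pdivrMr ?mulr_gt0 //; lra.
have := small _ t_gt0 t_lt1.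
by rewrite mulrAC ler_pdivlMr ?mulr_gt0 //; nra.
Qed.

Lemma scale_comb_subr (t : R) u v : t *: u + (1 - t) *: v - v = t *: (u - v).
Proof. by rewrite scalerBl scale1r scalerBr addrCA addrC addrK. Qed.

Lemma is_proj_obtuse {X z p y} : cvx_set X -> is_proj X z p -> X y ->
  dotv (z - p) (y - p) <= 0.
Proof.
move=> cvxX [Xp p_min] Xy.
apply: (@le0_of_le_mul_small _ (enorm (y - p) ^+ 2 / 2)).
  by rewrite divr_ge0 ?sqr_ge0.
move=> t t_gt0 t_lt1.
have := p_min _ (cvxX y p t Xy Xp (ltW t_gt0) (ltW t_lt1)).
rewrite -ler_sqr ?nnegrE ?enorm_ge0 //.
have -> : z - (t *: y + (1 - t) *: p) = (z - p) - t *: (y - p).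
  by rewrite -scale_comb_subr opprB addrA subrK.
rewrite [X in _ <= X]enormB_sqr enormZ dotvZr ger0_norm ?(ltW t_gt0) //; nra.
Qed.

Lemma is_proj_dist_le {X z p y} : cvx_set X -> is_proj X z p -> X y ->
  enorm (p - y) <= enorm (z - y).
Proof.
move=> cvxX projp Xy; have obtuse := is_proj_obtuse cvxX projp Xy.
rewrite -ler_sqr ?nnegrE ?enorm_ge0 //.
have -> : z - y = (z - p) - (y - p) by rewrite opprB addrA subrK.
rewrite [X in _ <= X]enormB_sqr (enormBC p y); have := sqr_ge0 (enorm (z - p)); lra.
Qed.

Lemma strongly_convex_subgrad {mu : R} {h : vec -> R} {x gx : vec} (y : vec) :
  0 <= mu -> strongly_convex mu h -> subgrad h x gx ->
  h x + dotv gx (y - x) + mu / 2 * enorm (y - x) ^+ 2 <= h y.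
Proof.
move=> mu_ge0 sch sgx; rewrite -subr_ge0 -oppr_le0 opprB.
apply: (@le0_of_le_mul_small _ (mu / 2 * enorm (y - x) ^+ 2)).
  by rewrite mulr_ge0 ?divr_ge0 ?sqr_ge0.
move=> t t_gt0 t_lt1.
have sc_t := sch y x t (ltW t_gt0) (ltW t_lt1).
have := sgx (t *: y + (1 - t) *: x); rewrite scale_comb_subr dotvZr => sg_t.
by rewrite -(ler_pM2l t_gt0); nra.
Qed.

Lemma argmin_quadratic_growth {X} {mu : R} {phi : vec -> R} {xm z : vec} :
  cvx_set X -> 0 <= mu -> strongly_convex mu phi -> is_argmin X phi xm -> X z ->
  phi xm + mu / 2 * enorm (z - xm) ^+ 2 <= phi z.
Proof.
move=> cvxX mu_ge0 scphi [Xxm xm_min] Xz; rewrite -subr_ge0 -oppr_le0 opprB.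
apply: (@le0_of_le_mul_small _ (mu / 2 * enorm (z - xm) ^+ 2)).
  by rewrite mulr_ge0 ?divr_ge0 ?sqr_ge0.
move=> t t_gt0 t_lt1.
have sc_t := scphi z xm t (ltW t_gt0) (ltW t_lt1).
have min_t := xm_min _ (cvxX z xm t Xz Xxm (ltW t_gt0) (ltW t_lt1)).
by rewrite -(ler_pM2l t_gt0); nra.
Qed.

Lemma strongly_convex_addl {F h : vec -> R} {lam mu : R} :
  0 <= lam -> convex_fun F -> strongly_convex mu h ->
  strongly_convex (lam * mu) (fun y => F y + lam * h y).
Proof.
move=> lam_ge0 cvxF sch u v t t_ge0 t_le1 /=.
have cvx_t := cvxF u v t t_ge0 t_le1.
have := ler_wpM2l lam_ge0 (sch u v t t_ge0 t_le1); nra.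
Qed.

Lemma convex_fun_sum (I : eqType) (r : seq I) (f : I -> vec -> R) :
  {in r, forall i, convex_fun (f i)} ->
  convex_fun (fun y => \sum_(i <- r) f i y).
Proof.
elim: r => [|i r IH] cvxf u v t t_ge0 t_le1.
  by rewrite !big_nil !mulr0 addr0.
rewrite !big_cons mulrDr [(1 - t) * _]mulrDr addrACA.
apply: lerD; first by apply: cvxf; rewrite ?mem_head.
by apply: IH => // j rj; apply: cvxf; rewrite in_cons rj orbT.
Qed.

Lemma convex_fun_double_sum {S} {I : 'I_S -> nat} {f : 'I_S -> nat -> vec -> R} :
  (forall i j, (1 <= j <= I i)%N -> convex_fun (f i j)) ->
  convex_fun (fun y => \sum_(i < S) \sum_(1 <= j < (I i).+1) f i j y).
Proof.
move=> cvxf; apply: convex_fun_sum => i _; apply: convex_fun_sum => j.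
by rewrite mem_index_iota ltnS => /andP[j_ge1 j_le]; apply: cvxf; rewrite j_ge1.
Qed.

Lemma cvx_set_avg X S (p : 'I_S -> vec) : cvx_set X -> (0 < S)%N ->
  (forall i, X (p i)) -> X (S%:R^-1 *: \sum_i p i).
Proof.
case: S p => [//|N] p cvxX _; elim: N p => [|N IH] p Xp.
  by rewrite big_ord1 invr1 scale1r.
have N1_gt0 : 0 < N.+1%:R :> R by rewrite ltr0n.
set q := fun i : 'I_N.+1 => p (widen_ord (leqnSn _) i).
pose t : R := N.+1%:R / N.+2%:R.
have -> : N.+2%:R^-1 *: \sum_i p i
        = t *: (N.+1%:R^-1 *: \sum_i q i) + (1 - t) *: p ord_max.
  rewrite big_ord_recr /= scalerDr scalerA.
  congr (_ *: _ + _ *: _); rewrite /t -[N.+2]addn1 natrD; field; lra.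
apply: cvxX; [by apply: IH => i; exact: Xp | exact: Xp | by rewrite divr_ge0 |].
by rewrite /t ler_pdivrMr ?ltr0n // mul1r ler_nat.
Qed.

End Convexity.

Section IncrementalStep.
Context {R : realType} {n : nat}.
Local Notation vec := 'rV[R]_n.

Lemma projected_step_le {X : set vec} {fj h : vec -> R} {xj xk y gj Hk p : vec}
    {gam c mu Cf CH : R} :
  cvx_set X -> X y -> 0 <= gam -> 0 <= c -> 0 <= mu ->
  subgrad fj xj gj -> fj xk - fj xj <= Cf * enorm (xj - xk) ->
  strongly_convex mu h -> subgrad h xk Hk -> enorm Hk <= CH ->
  is_proj X (xj - gam *: gj - c *: Hk) p ->
  enorm (p - y) ^+ 2 <= enorm (xj - y) ^+ 2 - 2 * gam * (fj xk - fj y)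
    - c * (2 * (h xk - h y) + mu * enorm (xk - y) ^+ 2)
    + 2 * (gam * Cf + c * CH) * enorm (xj - xk)
    + enorm (gam *: gj + c *: Hk) ^+ 2.
Proof.
move=> cvxX Xy gam_ge0 c_ge0 mu_ge0 sgf lipf sch sgh Hk_le projp.
set e := enorm (xj - xk) in lipf *.
have lin_f : fj xk - fj y - Cf * e <= dotv (xj - y) gj.
  have := sgf y; rewrite dotvC -opprB dotvNl; lra.
have lin_h : h xk - h y + mu / 2 * enorm (xk - y) ^+ 2 - CH * e <= dotv (xj - y) Hk.
  have := strongly_convex_subgrad y mu_ge0 sch sgh.
  rewrite dotvC -[y - xk]opprB dotvNl enormN => sc.
  have -> : xj - y = (xj - xk) + (xk - y) by rewrite addrA subrK.
  rewrite dotvDl; have cs := dotv_ge_enorm (xj - xk) Hk.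
  have eH := ler_wpM2l (enorm_ge0 (xj - xk)) Hk_le.
  rewrite -/e in cs eH; lra.
have := is_proj_dist_le cvxX projp Xy.
rewrite -ler_sqr ?nnegrE ?enorm_ge0 // => /le_trans; apply.
have -> : xj - gam *: gj - c *: Hk - y = (xj - y) - (gam *: gj + c *: Hk).
  by rewrite opprD addrA !(addrAC _ _ (- y)).
rewrite (enormB_sqr (xj - y)) dotvDr !dotvZr.
have := ler_wpM2l gam_ge0 lin_f; have := ler_wpM2l c_ge0 lin_h; lra.
Qed.

End IncrementalStep.

Section IncrementalPass.
Context {R : realType} {n : nat}.
Local Notation vec := 'rV[R]_n.
Context {X : set vec} {N : nat} {fs : nat -> vec -> R} {h : vec -> R}.
Context {xs gs : nat -> vec} {Hk xk : vec} {gam c mu Cf CH : R}.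
Hypotheses (cvxX : cvx_set X) (Xxk : X xk).
Hypotheses (gam_ge0 : 0 <= gam) (c_ge0 : 0 <= c) (mu_ge0 : 0 <= mu).
Hypotheses (sch : strongly_convex mu h) (sgh : subgrad h xk Hk) (Hk_le : enorm Hk <= CH).
Hypothesis xs1 : xs 1%N = xk.
Hypothesis step : forall j, (1 <= j <= N)%N ->
  subgrad (fs j) (xs j) (gs j) /\ is_proj X (xs j - gam *: gs j - c *: Hk) (xs j.+1).
Hypothesis gs_le : forall j, (1 <= j <= N)%N ->
  forall y, X y -> forall g, subgrad (fs j) y g -> enorm g <= Cf.
Hypothesis fs_lip : forall j, (1 <= j <= N)%N ->
  forall y z, X y -> X z -> `|fs j y - fs j z| <= Cf * enorm (y - z).

Let b := gam * Cf + c * CH.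

Lemma incremental_pass_le y : X y -> forall j, (j <= N)%N ->
  [/\ X (xs j.+1), enorm (xs j.+1 - xk) <= j%:R * b &
      enorm (xs j.+1 - y) ^+ 2 <= enorm (xk - y) ^+ 2
        - 2 * gam * \sum_(1 <= l < j.+1) (fs l xk - fs l y)
        - j%:R * c * (2 * (h xk - h y) + mu * enorm (xk - y) ^+ 2)
        + (j%:R * b) ^+ 2].
Proof.
move=> Xy; elim=> [_|j IH jN].
  rewrite xs1 subrr enorm0 big_geq // !mul0r mulr0 expr0n /= !subr0 addr0.
  by split.
have [Xj dist_j bound_j] := IH (ltnW jN).
have j_in : (1 <= j.+1 <= N)%N by rewrite ltn0Sn jN.
have [sgj projj] := step _ j_in.
set xj := xs j.+1 in Xj dist_j bound_j sgj projj *.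
have gj_le := gs_le _ j_in _ Xj _ sgj.
have [Cf_ge0 CH_ge0] := (le_trans (enorm_ge0 _) gj_le, le_trans (enorm_ge0 _) Hk_le).
have b_ge0 : 0 <= b by rewrite /b addr_ge0 ?mulr_ge0.
have v_le : enorm (gam *: gs j.+1 + c *: Hk) <= b.
  apply: le_trans (enormD _ _) _; rewrite !enormZ !ger0_norm //.
  by apply: lerD; apply: ler_wpM2l.
have move_le : enorm (xs j.+2 - xj) <= b.
  apply: le_trans (is_proj_dist_le cvxX projj Xj) _.
  by rewrite addrAC [xj - _ - xj]addrAC subrr add0r -opprD enormN.
split; first by case: projj.
- have -> : xs j.+2 - xk = (xs j.+2 - xj) + (xj - xk) by rewrite addrA subrK.
  by apply: le_trans (enormD _ _) _; rewrite -natr1; lra.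
- have lip : fs j.+1 xk - fs j.+1 xj <= Cf * enorm (xj - xk).
    by have := fs_lip _ j_in _ _ Xj Xxk; rewrite ler_norml; lra.
  apply: le_trans (projected_step_le cvxX Xy gam_ge0 c_ge0 mu_ge0 sgj lip sch sgh
    Hk_le projj) _.
  have := ler_wpM2l (mulr_ge0 (ler0n _ 2) b_ge0) dist_j.
  rewrite -ler_sqr ?nnegrE ?enorm_ge0 // in v_le.
  by rewrite big_nat_recr //= -natr1 -/b; nra.
Qed.

End IncrementalPass.

Lemma card_le_sum_gt0 {S : nat} {I : 'I_S -> nat} :
  (forall i, 0 < I i)%N -> (S <= \sum_(i < S) I i)%N.
Proof. by move=> I_gt0; rewrite -[S in (S <= _)%N]card_ord -sum1_card leq_sum. Qed.

Section FismRound.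
Context {R : realType} {n : nat}.
Local Notation vec := 'rV[R]_n.
Context {S : nat} {I : 'I_S -> nat} {f : 'I_S -> nat -> vec -> R} {h : vec -> R}.
Context {X : set vec} {xs gs : 'I_S -> nat -> vec} {Hk xk y : vec} {gam lam mu Cf CH : R}.
Let m := (\sum_(i < S) I i)%N.
Let F z := \sum_(i < S) \sum_(1 <= j < (I i).+1) f i j z.
Hypotheses (S_gt0 : (0 < S)%N) (I_gt0 : forall i, (0 < I i)%N).
Hypotheses (cvxX : cvx_set X) (Xxk : X xk).
Hypotheses (gam_gt0 : 0 < gam) (lam_gt0 : 0 < lam) (mu_ge0 : 0 <= mu).
Hypotheses (sch : strongly_convex mu h) (sgh : subgrad h xk Hk) (Hk_le : enorm Hk <= CH).
Hypothesis xs1 : forall i, xs i 1%N = xk.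
Hypothesis step : forall i j, (1 <= j <= I i)%N ->
  subgrad (f i j) (xs i j) (gs i j) /\
  is_proj X (xs i j - gam *: gs i j - (gam * lam / m%:R) *: Hk) (xs i j.+1).
Hypothesis gs_le : forall i j, (1 <= j <= I i)%N ->
  forall z, X z -> forall g, subgrad (f i j) z g -> enorm g <= Cf.
Hypothesis f_lip : forall i j, (1 <= j <= I i)%N ->
  forall z w, X z -> X w -> `|f i j z - f i j w| <= Cf * enorm (z - w).
Hypothesis y_min : is_argmin X (fun z => F z + lam * h z) y.

Lemma fism_round_le :
  enorm (S%:R^-1 *: \sum_i xs i (I i).+1 - y) ^+ 2
    <= (1 - gam * lam * mu / m%:R) * enorm (xk - y) ^+ 2
       + gam ^+ 2 * (m%:R * Cf + lam * CH) ^+ 2.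
Proof.
have [Xy y_le] := y_min.
have S_gt0r : 0 < S%:R :> R by rewrite ltr0n.
have m_gt0 : 0 < m%:R :> R by rewrite ltr0n (leq_trans S_gt0 (card_le_sum_gt0 I_gt0)).
set c := gam * lam / m%:R; set b := gam * Cf + c * CH.
set Dk := enorm (xk - y) ^+ 2; set W := 2 * (h xk - h y) + mu * Dk.
have pass i : enorm (xs i (I i).+1 - y) ^+ 2 <=
    Dk - 2 * gam * \sum_(1 <= l < (I i).+1) (f i l xk - f i l y)
    - (I i)%:R * c * W + ((I i)%:R * b) ^+ 2.
  by have [] := incremental_pass_le cvxX Xxk (ltW gam_gt0)
    (divr_ge0 (mulr_ge0 (ltW gam_gt0) (ltW lam_gt0)) (ltW m_gt0)) mu_ge0 sch sgh Hk_le
    (xs1 i) (step i) (gs_le i) (f_lip i) _ Xy _ (leqnn (I i)).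
have sum_pass : \sum_i enorm (xs i (I i).+1 - y) ^+ 2 <=
    S%:R * Dk - 2 * gam * (F xk - F y) - gam * lam * W
    + b ^+ 2 * \sum_i (I i)%:R ^+ 2.
  have eF : \sum_i \sum_(1 <= l < (I i).+1) (f i l xk - f i l y) = F xk - F y.
    by rewrite /F -sumrB; apply: eq_bigr => i _; rewrite sumrB.
  have mc : m%:R * c = gam * lam by rewrite /c mulrCA mulfV ?gt_eqF ?mulr1.
  apply: le_trans (ler_sum _ (fun i _ => pass i)) _.
  rewrite !big_split /= !sumrN sumr_const card_ord -!mulr_sumr -!mulr_suml -natr_sum.
  rewrite -/m eF mc -[Dk *+ S]mulr_natl; under eq_bigr do rewrite exprMn mulrC.
  by rewrite -mulr_sumr.
have jensen := enorm_avg_subr_sqr_le _ (fun i => xs i (I i).+1) y S_gt0.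
have gap : 0 <= 2 * gam * (F xk - F y + lam * (h xk - h y)).
  apply: mulr_ge0; first by rewrite pmulr_rge0 // ltW.
  by have := y_le _ Xxk; lra.
have I2_le : b ^+ 2 * \sum_i (I i)%:R ^+ 2 <= b ^+ 2 * m%:R ^+ 2.
  by rewrite ler_wpM2l ?sqr_ge0 // natr_sum sumr_sqr_le_sqr_sumr.
have rate_le : S%:R * (gam * lam * mu / m%:R) * Dk <= gam * lam * mu * Dk.
  apply: ler_wpM2r; first exact: sqr_ge0.
  have : 0 <= gam * lam * mu by rewrite pmulr_rge0 // mulr_gt0.
  have : S%:R / m%:R <= 1 :> R.
    by rewrite ler_pdivrMr // mul1r ler_nat card_le_sum_gt0.
  nra.
have mb : m%:R ^+ 2 * b ^+ 2 = gam ^+ 2 * (m%:R * Cf + lam * CH) ^+ 2.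
  by rewrite /b /c; field; rewrite gt_eqF.
have err_le : gam ^+ 2 * (m%:R * Cf + lam * CH) ^+ 2
            <= S%:R * (gam ^+ 2 * (m%:R * Cf + lam * CH) ^+ 2).
  by rewrite ler_peMl ?ler1n // mulr_ge0 ?sqr_ge0.
rewrite -(ler_pM2l S_gt0r); rewrite /W in sum_pass; lra.
Qed.

End FismRound.

Section RegularizationPath.
Context {R : realType} {n : nat}.
Local Notation vec := 'rV[R]_n.

Lemma dist_argmin_reg_le {X : set vec} {F h : vec -> R} {mu CH lam lam' : R}
    {y y' : vec} :
  cvx_set X -> convex_fun F -> 0 < mu -> strongly_convex mu h -> 0 <= CH ->
  (forall z w, X z -> X w -> `|h z - h w| <= CH * enorm (z - w)) ->
  0 < lam -> lam <= lam' ->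
  is_argmin X (fun z => F z + lam * h z) y ->
  is_argmin X (fun z => F z + lam' * h z) y' ->
  enorm (y' - y) <= CH / mu * (lam' / lam - 1).
Proof.
move=> cvxX cvxF mu_gt0 sch CH_ge0 h_lip lam_gt0 lam_le y_min y'_min.
have lam'_gt0 : 0 < lam' := lt_le_trans lam_gt0 lam_le.
have [[Xy _] [Xy' _]] := (y_min, y'_min).
have grow := argmin_quadratic_growth cvxX (mulr_ge0 (ltW lam_gt0) (ltW mu_gt0))
  (strongly_convex_addl (ltW lam_gt0) cvxF sch) y_min Xy'.
have grow' := argmin_quadratic_growth cvxX (mulr_ge0 (ltW lam'_gt0) (ltW mu_gt0))
  (strongly_convex_addl (ltW lam'_gt0) cvxF sch) y'_min Xy.
rewrite /= enormBC in grow'; set d := enorm (y' - y) in grow grow' *.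
have := h_lip _ _ Xy Xy'; rewrite ler_norml enormBC -/d => /andP[_ dh].
have d_ge0 : 0 <= d := enorm_ge0 _.
(* adding the two growth inequalities cancels F *)
have key : lam * mu * d ^+ 2 <= (lam' - lam) * CH * d.
  have := ler_wpM2l (_ : 0 <= lam' - lam) dh; rewrite subr_ge0 => /(_ lam_le).
  have := ler_wpM2r (mulr_ge0 (ltW mu_gt0) (sqr_ge0 d)) lam_le; nra.
have -> : CH / mu * (lam' / lam - 1) = (lam' - lam) * CH / (lam * mu).
  by field; rewrite !gt_eqF.
rewrite ler_pdivlMr ?mulr_gt0 //.
have [->|d_neq0] := eqVneq d 0; first by rewrite mul0r mulr_ge0 // subr_ge0.
have d_gt0 : 0 < d by rewrite lt0r d_neq0.
by rewrite -(ler_pM2r d_gt0); nra.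
Qed.

Lemma perturbed_contraction {a r : R} (u : vec) {y y' : vec} :
  0 < a -> a <= 2 -> enorm (y' - y) <= r ->
  (1 - a) * enorm (u - y) ^+ 2 <= (1 - a / 2) * enorm (u - y') ^+ 2 + 4 / a * r ^+ 2.
Proof.
move=> a_gt0 a_le2 d_le.
set p := enorm (u - y'); set d := enorm (y' - y) in d_le *.
have [p_ge0 d_ge0] : 0 <= p /\ 0 <= d by split; exact: enorm_ge0.
have d2_le : d ^+ 2 <= r ^+ 2 by rewrite ler_sqr ?nnegrE ?(le_trans d_ge0).
have tri : enorm (u - y) <= p + d.
  have -> : u - y = (u - y') + (y' - y) by rewrite addrA subrK.
  exact: enormD.
have [a_ge1|a_lt1] := lerP 1 a.
  have : (1 - a) * enorm (u - y) ^+ 2 <= 0 by rewrite mulr_le0_ge0 ?sqr_ge0 ?subr_le0.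
  have : 0 <= (1 - a / 2) * p ^+ 2.
    by rewrite mulr_ge0 ?sqr_ge0 // subr_ge0 ler_pdivrMr //; lra.
  have : 0 <= 4 / a * r ^+ 2 by rewrite mulr_ge0 ?sqr_ge0 ?divr_ge0 // ltW.
  lra.
apply: (@le_trans _ _ ((1 - a) * (p + d) ^+ 2)).
  apply: ler_wpM2l; first by rewrite subr_ge0 ltW.
  by rewrite ler_sqr ?nnegrE ?addr_ge0 ?enorm_ge0.
rewrite -(ler_pM2l a_gt0).
have -> : a * ((1 - a / 2) * p ^+ 2 + 4 / a * r ^+ 2)
        = a * (1 - a / 2) * p ^+ 2 + 4 * r ^+ 2 by field; rewrite gt_eqF.
(* Young's inequality [2 a (1 - a) p d <= a^2 p^2 / 2 + 2 (1 - a)^2 d^2] *)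
have := sqr_ge0 (a * p - 2 * (1 - a) * d).
have : (1 - a) * (2 - a) * d ^+ 2 <= 2 * d ^+ 2.
  by apply: ler_wpM2r; [exact: sqr_ge0 | nra].
nra.
Qed.

End RegularizationPath.

Lemma fism_error_const_le {R : realType} {M Cf CH l l1 : R} :
  1 <= M -> 0 <= Cf -> 0 <= CH -> 0 <= l -> l <= l1 ->
  (M * Cf + l * CH) ^+ 2 <= 4 * M ^+ 3 * (Cf ^+ 2 + 2 * l1 ^+ 2 * CH ^+ 2 / M ^+ 2)
                            + 2 * Cf * M ^+ 2 * (Cf + l1 * CH / M).
Proof.
move=> M_ge1 Cf_ge0 CH_ge0 l_ge0 l_le.
have -> : 4 * M ^+ 3 * (Cf ^+ 2 + 2 * l1 ^+ 2 * CH ^+ 2 / M ^+ 2)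
          + 2 * Cf * M ^+ 2 * (Cf + l1 * CH / M)
        = (4 * M + 2) * (M * Cf) ^+ 2 + 8 * M * (l1 * CH) ^+ 2
          + 2 * (M * Cf) * (l1 * CH).
  by field; rewrite gt_eqF ?(lt_le_trans ltr01).
have M_ge0 : 0 <= M := le_trans ler01 M_ge1.
have lCH_ge0 : 0 <= l * CH by rewrite mulr_ge0.
have lCH_le : l * CH <= l1 * CH by rewrite ler_wpM2r.
have MCf_ge0 : 0 <= M * Cf by rewrite mulr_ge0.
have h1 : (M * Cf) ^+ 2 <= (4 * M + 2) * (M * Cf) ^+ 2.
  by rewrite ler_peMl ?sqr_ge0 //; lra.
have h2 := ler_wpM2l MCf_ge0 lCH_le.
have h3 : (l * CH) ^+ 2 <= 8 * M * (l1 * CH) ^+ 2.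
  apply: le_trans (_ : (l1 * CH) ^+ 2 <= _).
    by rewrite ler_sqr ?nnegrE // (le_trans lCH_ge0).
  by rewrite ler_peMl ?sqr_ge0 //; lra.
rewrite sqrrD; lra.
Qed.

Lemma nonincreasing_le1 {d} {T : porderType d} {u : nat -> T} :
  (forall k, (1 <= k)%N -> (u k.+1 <= u k)%O) -> forall k, (1 <= k)%N -> (u k <= u 1%N)%O.
Proof.
move=> u_dec [//|k] _.
have u_noninc : nonincreasing_seq (fun j => u j.+1).
  by apply/nonincreasing_seqP => j; exact: u_dec.
exact: (u_noninc 0%N k (leq0n k)).
Qed.

Theorem lemma2 (R : realType) (n S : nat) (I : 'I_S -> nat)
  (f : 'I_S -> nat -> 'rV[R]_n -> R) (H : 'rV[R]_n -> R) (muH : R)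
  (X : set 'rV[R]_n) (Cf CH : R)
  (gamma lambda : nat -> R)
  (x : nat -> 'rV[R]_n)                       (* x_k *)
  (xs : nat -> 'I_S -> nat -> 'rV[R]_n)      (* x^i_{k,j} *)
  (g : nat -> 'I_S -> nat -> 'rV[R]_n)       (* g^i_{k,j} *)
  (Hs : nat -> 'rV[R]_n)                     (* \mathcal{H}_k *)
  (xstar : nat -> 'rV[R]_n) :                (* x^*_{lambda_k} *)
  (0 < S)%N -> (forall i, (0 < I i)%N) ->
  0 < muH -> strongly_convex muH H ->
  (forall i j, (1 <= j <= I i)%N -> convex_fun (f i j)) ->
  X !=set0 -> compact X -> cvx_set X ->
  (* the constants C_f and C_H *)
  0 < Cf ->
  (forall i j, (1 <= j <= I i)%N -> forall y, X y -> forall gg,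
      subgrad (f i j) y gg -> enorm gg <= Cf) ->
  (forall i j, (1 <= j <= I i)%N -> forall y z, X y -> X z ->
      `|f i j y - f i j z| <= Cf * enorm (y - z)) ->
  0 < CH ->
  (forall y, X y -> forall gg, subgrad H y gg -> enorm gg <= CH) ->
  (forall y z, X y -> X z -> `|H y - H z| <= CH * enorm (y - z)) ->
  (forall y, X y -> `|H y| <= CH) ->
  let m : nat := (\sum_(i < S) I i)%N in
  let F : 'rV[R]_n -> R := fun y => \sum_(i < S) \sum_(1 <= j < (I i).+1) f i j y in
  (* positive stepsizes *)
  (forall k, (1 <= k)%N -> 0 < gamma k /\ 0 < lambda k) ->
  (* FISM iteration *)
  (forall k, (1 <= k)%N -> subgrad H (x k) (Hs k)) ->
  (forall k i, (1 <= k)%N -> xs k i 1%N = x k) ->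
  (forall k i j, (1 <= k)%N -> (1 <= j <= I i)%N ->
      subgrad (f i j) (xs k i j) (g k i j) /\
      is_proj X (xs k i j - gamma k *: g k i j
                  - (gamma k * lambda k / m%:R) *: Hs k) (xs k i j.+1)) ->
  (forall k, (1 <= k)%N ->
      x k.+1 = (S%:R)^-1 *: \sum_(i < S) xs k i (I i).+1) ->
  (* stepsize conditions *)
  (forall k, (1 <= k)%N -> 0 < gamma k * lambda k * muH <= 2 * m%:R) ->
  (forall k, (1 <= k)%N -> lambda k.+1 <= lambda k) ->
  (* minimizers of F + lambda_k H over X *)
  (forall k, (1 <= k)%N -> is_argmin X (fun y => F y + lambda k * H y) (xstar k)) ->
  let C : R := 4 * m%:R ^+ 3 * (Cf ^+ 2 + 2 * lambda 1%N ^+ 2 * CH ^+ 2 / m%:R ^+ 2)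
             + 2 * Cf * m%:R ^+ 2 * (Cf + lambda 1%N * CH / m%:R) in
  forall k, (2 <= k)%N ->
    enorm (x k.+1 - xstar k) ^+ 2 <=
      (1 - gamma k * lambda k * muH / (2 * m%:R)) * enorm (x k - xstar k.-1) ^+ 2
      + 4 * m%:R * CH ^+ 2 / (gamma k * lambda k * muH ^+ 3)
          * (1 - lambda k.-1 / lambda k) ^+ 2
      + gamma k ^+ 2 * C.
Proof.
move=> S_gt0 I_gt0 mu_gt0 sch cvxf _ _ cvxX Cf_gt0 gs_le f_lip CH_gt0 Hs_le h_lip _
  m F pos sgH xs1 step avg stepsize lam_dec argmin C [//|k] k_ge1.
have k1_gt0 := ltn0Sn k.
have [[gam_gt0 lam_gt0] /andP[gl_gt0 gl_le]] := (pos _ k1_gt0, stepsize _ k1_gt0).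
have m_ge1 : 1 <= m%:R :> R by rewrite ler1n (leq_trans S_gt0 (card_le_sum_gt0 I_gt0)).
have Xxk : X (x k.+1).
  rewrite avg //; apply: cvx_set_avg => // i.
  have Ii_in : (1 <= I i <= I i)%N by rewrite I_gt0 leqnn.
  by have [_ []] := step k i (I i) k_ge1 Ii_in.
have round := fism_round_le S_gt0 I_gt0 cvxX Xxk gam_gt0 lam_gt0 (ltW mu_gt0) sch
  (sgH _ k1_gt0) (Hs_le _ Xxk _ (sgH _ k1_gt0)) (fun i => xs1 _ i k1_gt0)
  (fun i j => step _ i j k1_gt0) gs_le f_lip (argmin _ k1_gt0).
have drift := dist_argmin_reg_le cvxX (convex_fun_double_sum cvxf) mu_gt0 sch (ltW CH_gt0) h_lip lam_gt0
  (lam_dec _ k_ge1) (argmin _ k1_gt0) (argmin _ k_ge1).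
set a := gamma k.+1 * lambda k.+1 * muH / m%:R in round.
have m_gt0 : 0 < m%:R :> R := lt_le_trans ltr01 m_ge1.
have a_gt0 : 0 < a by rewrite divr_gt0.
have a_le2 : a <= 2 by rewrite ler_pdivrMr.
have contr := perturbed_contraction (x k.+1) a_gt0 a_le2 drift.
have const := fism_error_const_le m_ge1 (ltW Cf_gt0) (ltW CH_gt0) (ltW lam_gt0)
  (nonincreasing_le1 lam_dec _ k1_gt0).
rewrite -avg // -/m in round; rewrite -/C in const; rewrite /=.
have -> : 1 - gamma k.+1 * lambda k.+1 * muH / (2 * m%:R) = 1 - a / 2.
  by rewrite /a; field; rewrite gt_eqF.
have -> : 4 * m%:R * CH ^+ 2 / (gamma k.+1 * lambda k.+1 * muH ^+ 3)
          * (1 - lambda k / lambda k.+1) ^+ 2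
        = 4 / a * (CH / muH * (lambda k / lambda k.+1 - 1)) ^+ 2.
  by rewrite /a; field; rewrite !gt_eqF.
have := ler_wpM2l (sqr_ge0 (gamma k.+1)) const; lra.
Qed.
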